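(* The $\mathbf{k}$-algebra homomorphism $A:\mathcal{X}\to\mathcal{Q}$ satisfies $A(\mathcal{J})=0$; equivalently, $A\big(x_{i,j}x_{j,k}-x_{i,k}(x_{i,j}+x_{j,k}+\beta)-\alpha\big)=0$ for all $1\le i<j<k\le n$.
   Context: Let $\mathbf{k}$ be a commutative ring, let $\beta,\alpha\in\mathbf{k}$, and let $n$ be a positive integer; write $[m]=\{1,2,\dots,m\}$. Let $\mathcal{X}=\mathbf{k}[x_{i,j}\mid 1\le i<j\le n]$ be the polynomial ring over $\mathbf{k}$ in the indeterminates $x_{i,j}$. Let $\mathcal{J}$ be the ideal of $\mathcal{X}$ generated by all elements $x_{i,j}x_{j,k}-x_{i,k}(x_{i,j}+x_{j,k}+\beta)-\alpha$ for $1\le i<j<k\le n$. Laurent series: for symbols $r_1,\dots,r_n$, a Laurent series over $\mathbf{k}$ is a formal sum $f=\sum_{a\in\mathbb{Z}^n}\lambda_a r_1^{a_1}\cdots r_n^{a_n}$ ($\lambda_a\in\mathbf{k}$) for which there is $d\in\mathbb{Z}$ such that $\lambda_a=0$ whenever some $a_i<d$. Let $\mathcal{Q}$ be the $\mathbf{k}$-algebra of all such Laurent series with the usual multiplication of series (each coefficient of a product is a finite sum); it contains $\mathbf{k}[[r_1,\dots,r_n]]$ and is given the coefficientwise (product) topology with $\mathbf{k}$ discrete. For $i\in[n]$ put $q_i=r_ir_{i+1}\cdots r_n$; the $q_i$ are invertible in $\mathcal{Q}$, every Laurent monomial $r_1^{b_1}\cdots r_n^{b_n}$ is uniquely of the form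 $q_1^{a_1}\cdots q_n^{a_n}$ with $a\in\mathbb{Z}^n$, and for $i<j$ one has $q_i/q_j=r_ir_{i+1}\cdots r_{j-1}$, so $1-q_i/q_j$ is invertible in $\mathbf{k}[[r_1,\dots,r_n]]$. Let $A:\mathcal{X}\to\mathcal{Q}$ be the $\mathbf{k}$-algebra homomorphism with $A(x_{i,j})=-\dfrac{q_i+\beta+\alpha/q_j}{1-q_i/q_j}$ for $1\le i<j\le n$. *)

(* Multivariate Laurent series in r_1..r_n (exponents bounded
   below), as in the paper, built by hand: mathcomp has no multivariate series. *)
From HB Require Import structures.
From mathcomp Require Import all_boot all_order all_algebra.
From Stdlib Require Import ClassicalEpsilon.
Set Implicit Arguments. Unset Strict Implicit. Unset Printing Implicit Defensive.
Import Order.TTheory GRing.Theory Num.Theory.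
Local Open Scope ring_scope.

Section Laurent.
Variables (R : comPzRingType) (n : nat).

(* exponent vectors a in Z^n; index l : 'I_n stands for the symbol r_(l+1) *)
Definition expo := {ffun 'I_n -> int}.

Definition ser := expo -> R.

Definition bounded_by (f : ser) (d : int) : Prop :=
  forall a : expo, (exists i, a i < d) -> f a = 0.
Definition is_laurent (f : ser) : Prop := exists d : int, bounded_by f d.

(* a chosen lower bound (valid whenever f is a Laurent series) *)
Definition lb (f : ser) : int := epsilon (inhabits 0%Z) (bounded_by f).

Definition zeroS : ser := fun _ => 0.
Definition constS (c : R) : ser := fun a => if a == [ffun _ => 0%Z] then c else 0.
Definition oneS : ser := constS 1.
Definition monoS (e : expo) : ser := fun a => if a == e then 1 else 0.
Definition addS (f g : ser) : ser := fun a => f a + g a.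
Definition oppS (f : ser) : ser := fun a => - f a.
Definition subS (f g : ser) : ser := addS f (oppS g).

(* product: coefficient of r^c is the finite sum over a + b = c with
   a_i >= lb f and b_i >= lb g, i.e. a_i = lb f + k_i, 0 <= k_i <= c_i - lb f - lb g *)
Definition mulS (f g : ser) : ser := fun c =>
  let d1 := lb f in let d2 := lb g in
  let N := (\max_(i < n) absz ((c i - d1 - d2)%R)).+1 in
  \sum_(k : {ffun 'I_n -> 'I_N} | [forall i, d1 + (k i)%:Z + d2 <= c i])
     f [ffun i => d1 + (k i)%:Z] * g [ffun i => c i - (d1 + (k i)%:Z)].

(* inverse in Q (a chosen Laurent series g with f g = 1, when one exists) *)
Definition invS (f : ser) : ser :=
  epsilon (inhabits zeroS) (fun g => is_laurent g /\ mulS f g = oneS).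
Definition divS (f g : ser) : ser := mulS f (invS g).

Definition qS (i : 'I_n) : ser :=
  monoS [ffun l : 'I_n => if (i <= l)%N then 1%Z else 0%Z].

Definition Ax (beta alpha : R) (i j : 'I_n) : ser :=
  oppS (divS (addS (addS (qS i) (constS beta)) (divS (constS alpha) (qS j)))
             (subS oneS (divS (qS i) (qS j)))).

End Laurent.

From HB Require Import structures.
From mathcomp Require Import all_boot all_order all_algebra zify ring.
From mathcomp Require Import boolp.
From Stdlib Require Import ClassicalEpsilon.
Set Implicit Arguments. Unset Strict Implicit. Unset Printing Implicit Defensive.
Import Order.TTheory GRing.Theory Num.Theory.
Local Open Scope ring_scope.

(* The Laurent series with exponents bounded below form a commutative ring, in
   which q_j = r_j ... r_n is an invertible monomial and 1 - q_i/q_j = 1 - r_i ... r_(j-1)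
   is inverted by the geometric series.  Hence x_ij := A(x_(i,j)) satisfies
   x_ij (q_j - q_i) = -(q_i q_j + beta q_j + alpha); multiplied by
   (q_j - q_i)(q_k - q_j)(q_k - q_i), the relation becomes a polynomial identity
   in the q's, and these three factors are units. *)

Lemma mulr_neq0_factors (R : pzSemiRingType) (x y : R) :
  x * y != 0 -> x != 0 /\ y != 0.
Proof.
by move=> xy; split; apply: contraNneq xy => ->; rewrite ?mul0r ?mulr0.
Qed.

Lemma big_seq_support (V : nmodType) (T : eqType) (F : T -> V) (s1 s2 : seq T) :
  uniq s1 -> uniq s2 ->
  (forall x, F x != 0 -> x \in s1) -> (forall x, F x != 0 -> x \in s2) ->
  \sum_(x <- s1) F x = \sum_(x <- s2) F x.
Proof.
move=> u1 u2 h1 h2.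
have supp s : \sum_(x <- s) F x = \sum_(x <- [seq x <- s | F x != 0]) F x.
  by rewrite big_filter [RHS]big_mkcond; apply: eq_bigr => x _; case: eqP => // ->.
rewrite (supp s1) (supp s2); apply/perm_big/uniq_perm; rewrite ?filter_uniq //.
by move=> x; rewrite !mem_filter; case: (F x != 0) (h1 x) (h2 x) => //= -> // ->.
Qed.

Lemma ler_bigmax_absz (n : nat) (F : 'I_n -> int) (i : 'I_n) :
  F i <= (\max_(j < n) `|F j|%N)%:Z.
Proof.
apply: le_trans (ler_norm (F i)) _.
by rewrite -abszE lez_nat (leq_bigmax (F := fun j => `|F j|%N)).
Qed.

Section TriangleRelation.
Variables (R : comPzRingType) (alpha beta : R).

Lemma mul_sub_of_inverses (qi qj pj w : R) :
  qj * pj = 1 -> (1 - qi * pj) * w = 1 -> (qj - qi) * (pj * w) = 1.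
Proof. by move=> qp qw; rewrite -qw -qp; ring. Qed.

Lemma mul_sub_of_quotient (qi qj pj w : R) :
  qj * pj = 1 -> (1 - qi * pj) * w = 1 ->
  - ((qi + beta + alpha * pj) * w) * (qj - qi) = - (qi * qj + beta * qj + alpha).
Proof.
move=> qp qw.
transitivity (- ((qi + beta + alpha * pj) * qj) * ((qj - qi) * (pj * w))).
  by rewrite -[LHS]mulr1 -qp; ring.
by rewrite mul_sub_of_inverses // mulr1 -[alpha in RHS]mulr1 -qp; ring.
Qed.

Lemma triangle_relation (qi qj qk dij djk dik xij xjk xik : R) :
  (qj - qi) * dij = 1 -> (qk - qj) * djk = 1 -> (qk - qi) * dik = 1 ->
  xij * (qj - qi) = - (qi * qj + beta * qj + alpha) ->
  xjk * (qk - qj) = - (qj * qk + beta * qk + alpha) ->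
  xik * (qk - qi) = - (qi * qk + beta * qk + alpha) ->
  xij * xjk - xik * (xij + xjk + beta) - alpha = 0.
Proof.
move=> uij ujk uik hij hjk hik.
set E := _ - alpha.
have E0 : E * (qj - qi) * (qk - qj) * (qk - qi) = 0.
  transitivity ((xij * (qj - qi)) * (xjk * (qk - qj)) * (qk - qi)
     - (xik * (qk - qi)) * (xij * (qj - qi)) * (qk - qj)
     - (xik * (qk - qi)) * (xjk * (qk - qj)) * (qj - qi)
     - beta * (xik * (qk - qi)) * (qj - qi) * (qk - qj)
     - alpha * (qj - qi) * (qk - qj) * (qk - qi)); first by rewrite /E; ring.
  by rewrite hij hjk hik; ring.
transitivity (E * ((qj - qi) * dij) * ((qk - qj) * djk) * ((qk - qi) * dik)).
  by rewrite uij ujk uik !mulr1.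
transitivity (E * (qj - qi) * (qk - qj) * (qk - qi) * (dij * djk * dik)); first ring.
by rewrite E0 mul0r.
Qed.
End TriangleRelation.

Section LaurentSeries.
Variables (R : comPzRingType) (n : nat).
Local Notation expo := (expo n).
Local Notation ser := (ser R n).

Lemma bounded_by_le (f : ser) (d d' : int) :
  bounded_by f d -> d' <= d -> bounded_by f d'.
Proof. by move=> fd le a [i lt]; apply: fd; exists i; lia. Qed.

Lemma laurent_common_bound (f g h : ser) :
  is_laurent f -> is_laurent g -> is_laurent h ->
  exists d, [/\ bounded_by f d, bounded_by g d & bounded_by h d].
Proof.
move=> [d1 fd1] [d2 gd2] [d3 hd3]; exists (Num.min d1 (Num.min d2 d3)).
by split; [apply: bounded_by_le fd1 _ | apply: bounded_by_le gd2 _ | apply: bounded_by_le hd3 _];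
  rewrite !ge_min lexx ?orbT.
Qed.

Lemma lbP (f : ser) : is_laurent f -> bounded_by f (lb f).
Proof. exact: epsilon_spec. Qed.

Lemma bounded_by_neq0 (f : ser) (d : int) (a : expo) (i : 'I_n) :
  bounded_by f d -> f a != 0 -> d <= a i.
Proof. by move=> fd; apply: contraNle => lt; apply/eqP/fd; exists i. Qed.

Lemma expo_subE (c a : expo) (i : 'I_n) : (c - a) i = c i - a i.
Proof. by rewrite !ffunE. Qed.

Lemma expo_addE (a b : expo) (i : 'I_n) : (a + b) i = a i + b i.
Proof. by rewrite !ffunE. Qed.

Lemma box_bound (c : expo) (d : int) : exists M : nat, forall i, c i <= d + M%:Z.
Proof.
exists (\max_(i < n) absz (c i - d)%R) => i.
by have := ler_bigmax_absz (fun i => c i - d) i; lia.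
Qed.

Definition box (d : int) (M : nat) : seq expo :=
  map (fun k : {ffun 'I_n -> 'I_M.+1} => [ffun i => d + (k i)%:Z])
      (enum {ffun 'I_n -> 'I_M.+1}).

Lemma box_uniq (d : int) (M : nat) : uniq (box d M).
Proof.
rewrite map_inj_uniq ?enum_uniq // => k k' /ffunP eq_kk'.
by apply/ffunP => i; apply: val_inj; move: (eq_kk' i); rewrite !ffunE => /addrI [].
Qed.

Lemma mem_box (d : int) (M : nat) (a : expo) :
  (a \in box d M) <-> (forall i, d <= a i <= d + M%:Z).
Proof.
split=> [/mapP [k _ ->] i | a_in].
  by rewrite ffunE lerDl lerD2l le0z_nat lez_nat -ltnS ltn_ord.
apply/mapP; exists [ffun i => inord `|a i - d|%N]; first by rewrite mem_enum.
apply/ffunP => i; have /andP [lo hi] := a_in i.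
have da : (`|a i - d|%N)%:Z = a i - d by rewrite abszE ger0_norm ?subr_ge0.
have ltM : (`|a i - d| < M.+1)%N by rewrite ltnS -lez_nat da; lia.
by rewrite !ffunE inordK // da addrC subrK.
Qed.

Lemma mulS_support_box (f g : ser) (c : expo) (d1 d2 : int) (M : nat) :
  bounded_by f d1 -> bounded_by g d2 -> (forall i, c i <= d1 + d2 + M%:Z) ->
  forall a, f a * g (c - a) != 0 -> a \in box d1 M.
Proof.
move=> fd1 gd2 cM a /mulr_neq0_factors [fa gca]; apply/mem_box => i.
have := bounded_by_neq0 i fd1 fa; have := bounded_by_neq0 i gd2 gca.
by rewrite expo_subE; have := cM i; lia.
Qed.

Lemma mulS_sum (f g : ser) (c : expo) (s : seq expo) :
  is_laurent f -> is_laurent g -> uniq s ->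
  (forall a, f a * g (c - a) != 0 -> a \in s) ->
  mulS f g c = \sum_(a <- s) f a * g (c - a).
Proof.
move=> /lbP fd1 /lbP gd2 us supp; rewrite /mulS.
set M := (\max_(i < n) _)%N.
have cM i : c i <= lb f + lb g + M%:Z.
  by have := ler_bigmax_absz (fun i => c i - lb f - lb g) i; lia.
rewrite (big_seq_support us (box_uniq _ M) supp (mulS_support_box fd1 gd2 cM)).
rewrite big_map big_mkcond big_enum /=; apply: eq_bigr => k _.
have -> : [ffun i => c i - (lb f + (k i)%:Z)] = c - [ffun i => lb f + (k i)%:Z].
  by apply/ffunP => i; rewrite !ffunE.
case: ifP => // /forallPn [i lt].
by rewrite gd2 ?mulr0 //; exists i; rewrite expo_subE ffunE; lia.
Qed.

Lemma bounded_by_mulS (f g : ser) (d1 d2 : int) :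
  bounded_by f d1 -> bounded_by g d2 -> bounded_by (mulS f g) (d1 + d2).
Proof.
move=> fd1 gd2 c [i lt]; rewrite (mulS_sum (s := [::])) ?big_nil //;
  [by exists d1 | by exists d2 |].
move=> a /mulr_neq0_factors [fa gca].
have := bounded_by_neq0 i fd1 fa; have := bounded_by_neq0 i gd2 gca.
by rewrite expo_subE; lia.
Qed.

Lemma laurent_mulS (f g : ser) : is_laurent f -> is_laurent g -> is_laurent (mulS f g).
Proof. by move=> [d1 fd1] [d2 gd2]; exists (d1 + d2); apply: bounded_by_mulS. Qed.

Lemma bounded_by_addS (f g : ser) (d : int) :
  bounded_by f d -> bounded_by g d -> bounded_by (addS f g) d.
Proof. by move=> fd gd a lt; rewrite /addS fd ?gd ?addr0. Qed.

Lemma laurent_addS (f g : ser) : is_laurent f -> is_laurent g -> is_laurent (addS f g).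
Proof.
move=> Lf Lg; have [d [fd gd _]] := laurent_common_bound Lf Lg Lg.
by exists d; apply: bounded_by_addS.
Qed.

Lemma laurent_oppS (f : ser) : is_laurent f -> is_laurent (oppS f).
Proof. by move=> [d fd]; exists d => a lt; rewrite /oppS fd ?oppr0. Qed.

Lemma laurent_constS (x : R) : is_laurent (@constS R n x).
Proof.
by exists 0 => a [i]; rewrite /constS; case: eqP => // ->; rewrite ffunE.
Qed.

Lemma laurent_monoS (e : expo) : is_laurent (monoS R e).
Proof.
exists (- (\max_(i < n) `|- e i|%N)%:Z) => a [i]; rewrite /monoS.
case: eqP => // ->; rewrite ltrNr; have := ler_bigmax_absz (fun i => - e i) i.
by lia.
Qed.

Lemma mulS_monoSl (e : expo) (f : ser) (c : expo) :
  is_laurent f -> mulS (monoS R e) f c = f (c - e).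
Proof.
move=> Lf; rewrite (mulS_sum (s := [:: e]) (laurent_monoS e) Lf) //.
  by rewrite big_seq1 /monoS eqxx mul1r.
by move=> a; rewrite inE; apply: contraNT => /negbTE ne; rewrite /monoS ne mul0r eqxx.
Qed.

Lemma monoS_mul (e e' : expo) : mulS (monoS R e) (monoS R e') = monoS R (e + e').
Proof.
apply/funext => c; rewrite mulS_monoSl; last exact: laurent_monoS.
by rewrite /monoS subr_eq addrC.
Qed.

Lemma mul1S (f : ser) : is_laurent f -> mulS (@oneS R n) f = f.
Proof. by move=> Lf; apply/funext => c; rewrite [LHS]mulS_monoSl // subr0. Qed.

Lemma mulSC (f g : ser) : is_laurent f -> is_laurent g -> mulS f g = mulS g f.
Proof.
move=> Lf Lg; apply/funext => c; have [M cM] := box_bound c (lb f + lb g).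
have supp := mulS_support_box (lbP Lf) (lbP Lg) cM.
rewrite (mulS_sum Lf Lg (box_uniq _ _) supp).
rewrite (mulS_sum (s := map (fun a => c - a) (box (lb f) M))) //.
- by rewrite [RHS]big_map; apply: eq_bigr => a _; rewrite subKr mulrC.
- by rewrite (map_inj_uniq (subrI c)) box_uniq.
move=> b gb; apply/mapP; exists (c - b); last by rewrite subKr.
by apply: supp; rewrite subKr mulrC.
Qed.

Lemma mulSDl (f g h : ser) : is_laurent f -> is_laurent g -> is_laurent h ->
  mulS (addS f g) h = addS (mulS f h) (mulS g h).
Proof.
move=> Lf Lg Lh; apply/funext => c; have [d [fd gd hd]] := laurent_common_bound Lf Lg Lh.
have [M cM] := box_bound c (d + d).
rewrite (mulS_sum (laurent_addS Lf Lg) Lh (box_uniq _ _)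
          (mulS_support_box (bounded_by_addS fd gd) hd cM)).
rewrite /addS (mulS_sum Lf Lh (box_uniq _ _) (mulS_support_box fd hd cM)).
rewrite (mulS_sum Lg Lh (box_uniq _ _) (mulS_support_box gd hd cM)) -big_split.
by apply: eq_bigr => a _; rewrite mulrDl.
Qed.

Lemma mulSA (f g h : ser) : is_laurent f -> is_laurent g -> is_laurent h ->
  mulS (mulS f g) h = mulS f (mulS g h).
Proof.
move=> Lf Lg Lh; apply/funext => c; have [d [fd gd hd]] := laurent_common_bound Lf Lg Lh.
have [M cM] := box_bound c (d + d + d).
pose A := box d M; pose B := box (d + d) M.
have inner_left b : b \in B ->
    mulS f g b * h (c - b) = \sum_(a <- A) f a * g (b - a) * h (c - b).
  move=> /mem_box bB; rewrite -big_distrl; congr (_ * _).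
  by apply: mulS_sum (box_uniq _ _) (mulS_support_box fd gd _) => // i; case/andP: (bB i).
have inner_right a : a \in A ->
    f a * mulS g h (c - a) = \sum_(b <- B) f a * g (b - a) * h (c - b).
  move=> /mem_box aA; rewrite (mulS_sum (s := [seq b - a | b <- B]) Lg Lh).
  - rewrite big_distrr big_map; apply: eq_bigr => b _ /=.
    by rewrite mulrA opprB subrKA.
  - by rewrite (map_inj_uniq (subIr a)) box_uniq.
  move=> b /mulr_neq0_factors [gb hcab]; apply/mapP; exists (b + a); last by rewrite addrK.
  apply/mem_box => i; have := bounded_by_neq0 i gd gb; have := bounded_by_neq0 i hd hcab.
  by rewrite !expo_subE expo_addE; have := aA i; have := cM i; lia.
rewrite (mulS_sum (laurent_mulS Lf Lg) Lh (box_uniq _ _)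
          (mulS_support_box (bounded_by_mulS fd gd) hd cM)).
rewrite (mulS_sum Lf (laurent_mulS Lg Lh) (box_uniq _ _)
          (mulS_support_box fd (bounded_by_mulS gd hd) (M := M) _)); last first.
  by move=> i; rewrite addrA.
by rewrite (eq_big_seq _ inner_left) (eq_big_seq _ inner_right) exchange_big.
Qed.
End LaurentSeries.

Section LaurentRing.
Variables (R : comPzRingType) (n : nat).
Local Notation expo := (expo n).
Local Notation ser := (ser R n).

Definition laurent := {f : ser | is_laurent f}.
HB.instance Definition _ := gen_eqMixin laurent.
HB.instance Definition _ := gen_choiceMixin laurent.

Lemma laurent_inj (u v : laurent) : sval u = sval v -> u = v.
Proof. by case: u v => [f Lf] [g Lg] /= fg; apply: eq_exist. Qed.

Lemma laurent_zeroS : is_laurent (@zeroS R n).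
Proof. by exists 0. Qed.

Definition laurent0 : laurent := exist _ (@zeroS R n) laurent_zeroS.
Definition laurent1 : laurent := exist _ (@oneS R n) (laurent_constS n 1).
Definition laurent_add (u v : laurent) : laurent :=
  exist _ (addS (sval u) (sval v)) (laurent_addS (svalP u) (svalP v)).
Definition laurent_opp (u : laurent) : laurent :=
  exist _ (oppS (sval u)) (laurent_oppS (svalP u)).
Definition laurent_mul (u v : laurent) : laurent :=
  exist _ (mulS (sval u) (sval v)) (laurent_mulS (svalP u) (svalP v)).

Lemma laurent_addA : associative laurent_add.
Proof. by move=> u v w; apply/laurent_inj/funext => a; apply: addrA. Qed.

Lemma laurent_addC : commutative laurent_add.
Proof. by move=> u v; apply/laurent_inj/funext => a; apply: addrC. Qed.

Lemma laurent_add0 : left_id laurent0 laurent_add.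
Proof. by move=> u; apply/laurent_inj/funext => a; apply: add0r. Qed.

Lemma laurent_addN : left_inverse laurent0 laurent_opp laurent_add.
Proof. by move=> u; apply/laurent_inj/funext => a; apply: addNr. Qed.

HB.instance Definition _ :=
  GRing.isZmodule.Build laurent laurent_addA laurent_addC laurent_add0 laurent_addN.

Lemma laurent_mulA : associative laurent_mul.
Proof. by move=> u v w; apply/laurent_inj/esym/mulSA; apply: svalP. Qed.

Lemma laurent_mulC : commutative laurent_mul.
Proof. by move=> u v; apply/laurent_inj/mulSC; apply: svalP. Qed.

Lemma laurent_mul1 : left_id laurent1 laurent_mul.
Proof. by move=> u; apply/laurent_inj/mul1S/svalP. Qed.

Lemma laurent_mulDl : left_distributive laurent_mul laurent_add.
Proof. by move=> u v w; apply/laurent_inj/mulSDl; apply: svalP. Qed.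

HB.instance Definition _ := GRing.Zmodule_isComPzRing.Build laurent
  laurent_mulA laurent_mulC laurent_mul1 laurent_mulDl.

Definition const_laurent (c : R) : laurent := exist _ (@constS R n c) (laurent_constS n c).
Definition mono (e : expo) : laurent := exist _ (monoS R e) (laurent_monoS R e).

Lemma monoD (e e' : expo) : mono (e + e') = mono e * mono e'.
Proof. exact/laurent_inj/esym/monoS_mul. Qed.

Lemma mono0 : mono 0 = 1.
Proof. exact: laurent_inj. Qed.

Lemma invS_eq (f g : laurent) : f * g = 1 -> invS (sval f) = sval g.
Proof.
move=> fg.
have [Lh fh] : is_laurent (invS (sval f)) /\ mulS (sval f) (invS (sval f)) = @oneS R n.
  apply: (epsilon_spec _ (fun h => is_laurent h /\ mulS (sval f) h = @oneS R n)).
  by exists (sval g); split; [apply: svalP | apply: (congr1 sval fg)].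
pose h : laurent := exist _ _ Lh.
have fh1 : f * h = 1 by apply: laurent_inj.
by rewrite -[invS _]/(sval h) -[h]mul1r -fg mulrAC fh1 mul1r.
Qed.

Section GeometricSeries.
Variables (u : expo) (i : 'I_n).
Hypothesis u_ge0 : forall l, 0 <= u l.

(* [r^a] occurs in [\sum_m r^(m u)] iff [a = m u], and then [m = a i] as [u i = 1]. *)
Definition geoS : ser :=
  fun a => if (0 <= a i) && (a == [ffun l => a i * u l]) then 1 else 0.

Lemma laurent_geoS : is_laurent geoS.
Proof.
exists 0 => a [l]; rewrite /geoS; case: andP => // [[ai0 /eqP ua]].
by rewrite ua ffunE ltNge mulr_ge0.
Qed.

Hypothesis u_i : u i = 1.

Lemma geoS_sub (c : expo) : geoS c - geoS (c - u) = oneS R c.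
Proof.
rewrite /geoS /oneS /constS expo_subE u_i.
have -> : (c - u == [ffun l => (c i - 1) * u l]) = (c == [ffun l => c i * u l]).
  apply/eqP/eqP => /ffunP cu; apply/ffunP => l; move: (cu l); rewrite !ffunE mulrBl mul1r.
    by move/addIr.
  by move=> ->.
have -> : (c == 0) = (c i == 0) && (c == [ffun l => c i * u l]).
  apply/eqP/andP => [-> | [/eqP ci0 /eqP ->]]; last first.
    by apply/ffunP => l; rewrite !ffunE ci0 mul0r.
  by rewrite ffunE eqxx; split=> //; apply/eqP/ffunP => l; rewrite !ffunE mul0r.
case: (c == _); rewrite ?andbF ?subrr //= !andbT.
by case: (ltgtP (c i) 0) => ci; repeat case: ifP => /= ?; rewrite ?subrr ?subr0 ?sub0r //; lia.
Qed.

Definition geo : laurent := exist _ geoS laurent_geoS.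

Lemma one_sub_mono_mul_geo : (1 - mono u) * geo = 1.
Proof.
rewrite mulrBl mul1r; apply/laurent_inj/funext => c.
change (geoS c - mulS (monoS R u) geoS c = oneS R c).
by rewrite mulS_monoSl ?geoS_sub //; apply: laurent_geoS.
Qed.
End GeometricSeries.
End LaurentRing.

Section QMonomials.
Variables (R : comPzRingType) (n : nat).
Local Notation expo := (expo n).

Definition qexp (i : 'I_n) : expo := [ffun l : 'I_n => if (i <= l)%N then 1%Z else 0%Z].

Definition q (i : 'I_n) : laurent R n := mono R (qexp i).
Definition q_inv (i : 'I_n) : laurent R n := mono R (- qexp i).

Lemma mul_q_inv (i : 'I_n) : q i * q_inv i = 1.
Proof. by rewrite -monoD subrr mono0. Qed.

Lemma qexp_sub_ge0 (i j : 'I_n) : (i <= j)%N -> forall l, 0 <= (qexp i - qexp j) l.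
Proof.
move=> ij l; rewrite expo_subE !ffunE.
have [jl|_] := leqP j l; first by rewrite (leq_trans ij jl) subrr.
by case: (i <= l)%N; rewrite subr0.
Qed.

Lemma qexp_sub_diag (i j : 'I_n) : (i < j)%N -> (qexp i - qexp j) i = 1.
Proof. by move=> ij; rewrite expo_subE !ffunE leqnn leqNgt ij subr0. Qed.

Definition inv_one_sub_ratio (i j : 'I_n) (ij : (i < j)%N) : laurent R n :=
  geo R i (qexp_sub_ge0 (ltnW ij)).

Lemma one_sub_ratio_mul_inv (i j : 'I_n) (ij : (i < j)%N) :
  (1 - q i * q_inv j) * inv_one_sub_ratio ij = 1.
Proof. by rewrite -monoD; apply: one_sub_mono_mul_geo; apply: qexp_sub_diag. Qed.

Lemma Ax_eq (beta alpha : R) (i j : 'I_n) (ij : (i < j)%N) :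
  Ax beta alpha i j = sval (- ((q i + const_laurent n beta + const_laurent n alpha * q_inv j)
                              * inv_one_sub_ratio ij)).
Proof. by rewrite /Ax /divS (invS_eq (mul_q_inv j)) (invS_eq (one_sub_ratio_mul_inv ij)). Qed.
End QMonomials.

Theorem proposition3p5 (R : comPzRingType) (beta alpha : R) (n : nat)
  (hn : (0 < n)%N) :
  forall i j k : 'I_n, (i < j)%N -> (j < k)%N ->
    subS (subS (mulS (Ax beta alpha i j) (Ax beta alpha j k))
               (mulS (Ax beta alpha i k)
                     (addS (addS (Ax beta alpha i j) (Ax beta alpha j k))
                           (@constS R n beta))))
         (@constS R n alpha)
    = @zeroS R n.
Proof.
move=> i j k ij jk; have ik := ltn_trans ij jk.
rewrite (Ax_eq beta alpha ij) (Ax_eq beta alpha jk) (Ax_eq beta alpha ik).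
pose quotient_eq i j ij := mul_sub_of_quotient (const_laurent n alpha) (const_laurent n beta)
  (mul_q_inv R j) (@one_sub_ratio_mul_inv R n i j ij).
pose unit_diff i j ij := mul_sub_of_inverses (mul_q_inv R j) (@one_sub_ratio_mul_inv R n i j ij).
(* [sval] of a ring expression of [laurent R n] reduces to the matching [addS]/[mulS] one. *)
exact: (congr1 sval (triangle_relation (unit_diff _ _ ij) (unit_diff _ _ jk) (unit_diff _ _ ik)
  (quotient_eq _ _ ij) (quotient_eq _ _ jk) (quotient_eq _ _ ik))).
Qed.
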